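(* Let $(V,Y,\mathbf{1})$ be a vertex operator algebra, $W$ a vector space and $Y_W:V\otimes W\to W((x))$ a linear map, written $u\otimes w\mapsto Y_W(u,x)w=\sum_{n\in\mathbb{Z}}u_nw\,x^{-n-1}$ (so $u_n=\mathrm{Res}_x x^nY_W(u,x)$). Let $u,v\in V$, $w\in W$ and $k,l\in\mathbb{Z}$ such that $v_nw=0$ for all $n\ge k$ and $u_nw=0$ for all $n\ge l$. Assume: (i) for all $p,q\in\mathbb{Z}$ with $q<k$, $$\mathrm{Res}_{x_0}\mathrm{Res}_{x_2}(x_0+x_2)^px_2^qY_W(u,x_0+x_2)Y_W(v,x_2)w=\mathrm{Res}_{x_0}\mathrm{Res}_{x_2}\,P_{p,q}(x_0,x_2)\,x_2^q(x_0+x_2)^lY_W(Y(u,x_0)v,x_2)w,$$ where $P_{p,q}(x_0,x_2)=\sum_{i=0}^{k-q-1}\binom{p-l}{i}x_0^{p-l-i}x_2^i$ (equivalently, $u_pv_qw=\sum_{i=0}^{k-q-1}\sum_{j=0}^{l}\binom{p-l}{i}\binom{l}{j}(u_{p-l-i+j}v)_{q+l+i-j}w$); (ii) for all $p,q\in\mathbb{Z}$ and all integers $i\ge k-q$, $$\mathrm{Res}_{x_0}\mathrm{Res}_{x_2}\,x_0^{p-l-i}x_2^{q+i}(x_0+x_2)^{l}\,Y_W(Y(u,x_0)v,x_2)w=0.$$ Then $$(x_0+x_2)^lY_W(u,x_0+x_2)Y_W(v,x_2)w=(x_0+x_2)^lY_W(Y(u,x_0)v,x_2)w.$$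
   Context: $Y(u,x)=\sum_n u_nx^{-n-1}$ denotes the vertex operator of $V$. Expressions $(x_0+x_2)^n$ (for any $n\in\mathbb{Z}$) and $Y_W(u,x_0+x_2)=\sum_n u_n(x_0+x_2)^{-n-1}$ are expanded in nonnegative powers of $x_2$. *)

From HB Require Import structures.
From mathcomp Require Import all_boot all_order all_algebra.
From Stdlib Require Import ClassicalEpsilon.
Set Implicit Arguments. Unset Strict Implicit. Unset Printing Implicit Defensive.
Import Order.TTheory GRing.Theory Num.Theory.
Local Open Scope ring_scope.

(* Generalized binomial coefficient binom(m, i) for m : int, i : nat.
   binom(n, i) = 'C(n, i) for n >= 0;
   binom(-(n+1), i) = (-1)^i 'C(n+i, i). *)
Definition binz (m : int) (i : nat) : int :=
  match m with
  | Posz n => ('C(n, i))%:Z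
  | Negz n => (-1) ^+ i * ('C(n + i, i))%:Z
  end.

(* Sum of a finitely supported family f : nat -> W (f j = 0 for j >= N);
   0 by convention if f is not finitely supported. The value does not
   depend on the chosen bound N. *)
Definition fsum (W : zmodType) (f : nat -> W) : W :=
  let P := fun N : nat => forall j, (N <= j)%N -> f j = 0 in
  if excluded_middle_informative (exists N, P N)
  then \sum_(j < epsilon (inhabits 0%N) P) f j
  else 0.

(* Formal series in x0, x2 with coefficients in W:
   F a b = coefficient of x0^a x2^b. *)
Definition series (W : Type) := int -> int -> W.

Definition mulmono (W : Type) (a b : int) (F : series W) : series W :=
  fun A B => F (A - a) (B - b).

(* Multiplication by (x0+x2)^m = sum_{i>=0} binom(m,i) x0^(m-i) x2^i
   (expanded in nonnegative powers of x2). *)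
Definition mulpow (W : zmodType) (m : int) (F : series W) : series W :=
  fun A B => fsum (fun i : nat => F (A - m + i%:Z) (B - i%:Z) *~ binz m i).

Definition Res2 (W : Type) (F : series W) : W := F (-1) (-1).

Definition mulP (W : zmodType) (k l p q : int) (F : series W) : series W :=
  fun A B => \sum_(i < `|k - q|%N | (i%:Z < k - q)%R)
               mulmono (p - l - i%:Z) i%:Z F A B *~ binz (p - l) i.

Section Ops.
Variables (V W : Type) (zW : zmodType).

(* Y_W(u, x0+x2) Y_W(v, x2) w, where
   Y_W(u,x0+x2) = sum_n u_n (x0+x2)^{-n-1}
               = sum_n sum_{j>=0} binom(-n-1,j) u_n x0^{-n-1-j} x2^j. *)
Definition YW_shift_comp (YW : V -> zW -> int -> zW) (u v : V) (w : zW)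
  : series zW :=
  fun a b => fsum (fun j : nat =>
     YW u (YW v w (j%:Z - 1 - b)) (-1 - a - j%:Z) *~ binz (a + j%:Z) j).

(* Y_W(Y(u,x0)v, x2) w : coefficient of x0^a x2^b is (u_{-a-1} v)_{-b-1} w. *)
Definition YW_iter (Y : V -> V -> int -> V) (YW : V -> zW -> int -> zW)
  (u v : V) (w : zW) : series zW :=
  fun a b => YW (Y u v (- a - 1)) w (- b - 1).
End Ops.

(* Vertex operator algebra (V, Y, 1) over a field K of characteristic 0 with
   conformal vector omega and central charge c, in components:
   Y u v n = u_n v, i.e. Y(u,x)v = sum_n u_n v x^{-n-1}. *)
Definition VirL (K : fieldType) (V : lmodType K) (Y : V -> V -> int -> V)
  (omega : V) (n : int) (v : V) : V := Y omega v (n + 1).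

Definition is_VOA (K : fieldType) (V : lmodType K) (Y : V -> V -> int -> V)
  (vac omega : V) (c : K) : Prop :=
  let L := VirL Y omega in
  [/\
      (forall (a : K) u1 u2 v n, Y (a *: u1 + u2) v n = a *: Y u1 v n + Y u2 v n),
      (forall (a : K) u v1 v2 n, Y u (a *: v1 + v2) n = a *: Y u v1 n + Y u v2 n),
      (forall u v, exists N : int, forall n, N <= n -> Y u v n = 0),
      (forall v n, Y vac v n = if n == -1 then v else 0)
      & ((forall u n, 0 <= n -> Y u vac n = 0) /\ (forall u, Y u vac (-1) = u))] /\
   [/\ (* Jacobi identity, in Borcherds component form *)
      (forall u v w (p q r : int),
         fsum (fun i : nat => Y (Y u v (r + i%:Z)) w (p + q - i%:Z) *~ binz p i)
         = fsum (fun i : nat =>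
             (Y u (Y v w (q + i%:Z)) (p + r - i%:Z)
              - Y v (Y u w (p + i%:Z)) (q + r - i%:Z) *~ ((-1) ^+ `|r|%N))
             *~ ((-1) ^+ i * binz r i))),
      (forall (m n : int) v,
         L m (L n v) - L n (L m v)
         = L (m + n) v *~ (m - n)
           + (if m + n == 0 then ((m ^+ 3 - m)%:~R / 12%:R * c) *: v else 0)),
      (* L(-1)-derivative property: Y(L(-1)u,x) = d/dx Y(u,x) *)
      (forall u v n, Y (L (-1) u) v n = Y u v (n - 1) *~ (- n))
      & L 0 omega = 2%:R *: omega] /\
   [/\ (* V = direct sum of L(0)-eigenspaces V_(n), n in Z *)
      (forall v, exists s : seq (int * V),
          v = \sum_(x <- s) x.2 /\ (forall x, x \in s -> L 0 x.2 = x.1%:~R *: x.2)),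
      (forall n : int, exists s : seq V, forall v, L 0 v = n%:~R *: v ->
          exists a : nat -> K, v = \sum_(i < size s) a i *: s`_i) &
      (exists N : int, forall (n : int) v, n < N -> L 0 v = n%:~R *: v -> v = 0)].

(* A linear map Y_W : V (x) W -> W((x)), in components YW u w n = u_n w. *)
Definition is_vertex_map (K : fieldType) (V W : lmodType K)
  (YW : V -> W -> int -> W) : Prop :=
  [/\ (forall (a : K) u1 u2 w n, YW (a *: u1 + u2) w n = a *: YW u1 w n + YW u2 w n),
      (forall (a : K) u w1 w2 n, YW u (a *: w1 + w2) n = a *: YW u w1 n + YW u w2 n) &
      (forall u w, exists N : int, forall n, N <= n -> YW u w n = 0)].

From HB Require Import structures.
From mathcomp Require Import all_boot all_order all_algebra.
From mathcomp Require Import ring zify.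
From Stdlib Require Import ClassicalEpsilon FunctionalExtensionality.
Set Implicit Arguments. Unset Strict Implicit. Unset Printing Implicit Defensive.
Import Order.TTheory GRing.Theory Num.Theory.
Local Open Scope ring_scope.

(* Let H be the difference of the two sides.  Both series vanish in
   x2-degree below -k: the left one because v_n w = 0 for n >= k, the right
   one by (ii) with i = 0.  For such series (x0+x2)^p = (x0+x2)^(p-l) (x0+x2)^l,
   and against x2^q P_{p,q} is an exact truncation of (x0+x2)^(p-l), so (i)
   says Res x2^q (x0+x2)^m H = 0 for all m and all q < k.  In the x2-degree
   these residues form a unitriangular system, hence H = 0.  Only the
   truncation of Y_W(v,x)w and the additivity of Y_W in w are used. *)

Lemma binz0 m : binz m 0 = 1.
Proof. by case: m => n //=; rewrite bin0 ?addn0 ?bin0 ?expr0 ?mul1r. Qed.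

Lemma binzS m i : binz (m + 1) i.+1 = binz m i.+1 + binz m i.
Proof.
case: m => [n|[|n]].
- by rewrite /= -PoszD addn1 /= binS PoszD.
- by rewrite /= subnn bin0n !add0n !binn !mulr1 exprS mulN1r addNr.
have -> : Negz n.+1 + 1 = Negz n by rewrite !NegzE; ring.
have CS : 'C((n + i.+1).+1, i.+1) = ('C(n + i, i.+1) + 'C(n + i, i) + 'C(n.+1 + i, i))%N.
  by rewrite binS !addnS binS addSn.
by rewrite /= addnS addSn binS exprS CS !PoszD; ring.
Qed.

Definition binz_conv (m l : int) (s : nat) : int :=
  \sum_(i < s.+1) binz m i * binz l (s - i).

Lemma binz_convS m l s :
  binz_conv m (l + 1) s.+1 = binz_conv m l s.+1 + binz_conv m l s.
Proof.
rewrite /binz_conv big_ord_recr /= subnn binz0.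
rewrite [in RHS]big_ord_recr /= subnn binz0 addrAC -big_split /=; congr (_ + _).
apply: eq_bigr => i _.
have le_is : (i <= s)%N by rewrite -ltnS.
by rewrite subSn // binzS mulrDr.
Qed.

Lemma binz_vandermonde m l s : binz_conv m l s = binz (m + l) s.
Proof.
elim/int_rect: l s => [|n IH|n IH] s.
- rewrite addr0 /binz_conv big_ord_recr /= subnn bin0 mulr1 big1 ?add0r // => i _.
  by rewrite bin0n subn_eq0 leqNgt ltn_ord mulr0.
- have -> : Posz n.+1 = Posz n + 1 by rewrite -addn1 PoszD.
  elim: s => [|s _]; first by rewrite /binz_conv big_ord1 !binz0.
  by rewrite binz_convS !IH addrA binzS.
- elim: s => [|s IHs]; first by rewrite /binz_conv big_ord1 !binz0.
  have e : - Posz n.+1 + 1 = - Posz n by rewrite -addn1 PoszD; ring.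
  have := binz_convS m (- Posz n.+1) s; rewrite e IH IHs.
  have -> : m - Posz n = (m - Posz n.+1) + 1 by rewrite -e addrA.
  by rewrite binzS => /addIr.
Qed.

Section FiniteSums.
Variable W : zmodType.

Lemma big_ord_trunc (g : nat -> W) N N' : (N <= N')%N ->
  (forall j, (N <= j)%N -> g j = 0) -> \sum_(j < N') g j = \sum_(j < N) g j.
Proof.
move=> le_NN' g0; rewrite (big_ord_widen N' g le_NN') [RHS]big_mkcond /=.
by apply: eq_bigr => i _; case: ifP => // /negbT; rewrite -leqNgt => /g0.
Qed.

Lemma fsumE (f : nat -> W) N :
  (forall j, (N <= j)%N -> f j = 0) -> fsum f = \sum_(j < N) f j.
Proof.
move=> f0; rewrite /fsum; case: excluded_middle_informative => [ex|]; last first.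
  by case; exists N.
set M := epsilon _ _.
have fM0 : forall j, (M <= j)%N -> f j = 0 by apply: (epsilon_spec _ _ ex).
rewrite -(big_ord_trunc (N' := maxn M N) (leq_maxl M N) fM0).
by rewrite (big_ord_trunc (leq_maxr M N) f0).
Qed.

Lemma big_cauchy (f : nat -> W) (c d : nat -> int) N :
  \sum_(i < N) \sum_(j < N - i) f (i + j)%N *~ (c i * d j)
  = \sum_(s < N) f s *~ (\sum_(i < s.+1) c i * d (s - i)%N).
Proof.
elim: N => [|N IH]; first by rewrite !big_ord0.
rewrite big_ord_recr /= subSnn big_ord1 addn0.
rewrite [RHS]big_ord_recr /= -IH mulrz_sumr big_ord_recr /= subnn addrA.
congr (_ + _); rewrite -big_split /=; apply: eq_bigr => i _.
by rewrite subSn 1?ltnW // big_ord_recr /= subnKC 1?ltnW.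
Qed.

Lemma big_binz_cauchy (f : nat -> W) (m l : int) n :
  (forall t, (n <= t)%N -> f t = 0) ->
  \sum_(i < n) (\sum_(j < n) f (i + j)%N *~ binz l j) *~ binz m i
  = \sum_(s < n) f s *~ binz (m + l) s.
Proof.
move=> f0.
under [RHS]eq_bigr => s _ do rewrite -binz_vandermonde /binz_conv.
rewrite -big_cauchy; apply: eq_bigr => i _.
pose g j := f (i + j)%N *~ binz l j *~ binz m i.
rewrite mulrz_suml -/(\sum_(j < n) g j).
rewrite (big_ord_trunc (g := g) (N := n - i)) ?leq_subr //.
  by apply: eq_bigr => j _; rewrite /g -mulrzA mulrC.
by move=> j; rewrite leq_subLR /g => /f0 ->; rewrite !mul0rz.
Qed.

End FiniteSums.

Section Series.
Variable W : zmodType.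
Implicit Types (F : series W) (N : int).

Definition vanish_below N F := forall a b, b < N -> F a b = 0.

Lemma mulmono_vanish a q N F :
  vanish_below N F -> vanish_below (N + q) (mulmono a q F).
Proof. by move=> F0 A B lt_B; apply: F0; lia. Qed.

Lemma mulpowE m N F A B (n : nat) : vanish_below N F -> B - n%:Z < N ->
  mulpow m F A B = \sum_(i < n) F (A - m + i%:Z) (B - i%:Z) *~ binz m i.
Proof. by move=> F0 lt_n; apply: fsumE => i le_ni; rewrite F0 ?mul0rz //; lia. Qed.

Lemma mulpow_vanish m N F : vanish_below N F -> vanish_below N (mulpow m F).
Proof. by move=> F0 A B lt_B; rewrite (mulpowE _ _ F0 (n := 0)) ?big_ord0 //; lia. Qed.

Lemma mulpow_mulmono m a q F :
  mulpow m (mulmono a q F) = mulmono a q (mulpow m F).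
Proof.
apply: functional_extensionality => A; apply: functional_extensionality => B.
rewrite /mulpow /mulmono; congr fsum; apply: functional_extensionality => i.
by congr (F _ _ *~ _); ring.
Qed.

Lemma mulpowD m l N F :
  vanish_below N F -> mulpow m (mulpow l F) = mulpow (m + l) F.
Proof.
move=> F0; apply: functional_extensionality => A; apply: functional_extensionality => B.
have lt_n : B - `|B - N|.+1%:Z < N by lia.
rewrite (mulpowE _ _ (mulpow_vanish l F0) lt_n) (mulpowE _ _ F0 lt_n).
rewrite -(big_binz_cauchy (f := fun s => F (A - (m + l) + s%:Z) (B - s%:Z))); last first.
  by move=> t le_nt; rewrite F0 //; lia.
apply: eq_big => // i _; congr (_ *~ _).
rewrite (mulpowE _ _ F0 (n := `|B - N|.+1)); last by lia.
by apply: eq_big => // j _; congr (F _ _ *~ _); rewrite PoszD; ring.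
Qed.

Lemma mulP_mulpow k l p q N F A B : vanish_below N F -> B - (k - q) < N ->
  mulP k l p q F A B = mulpow (p - l) F A B.
Proof.
move=> F0 lt_B; rewrite /mulP (mulpowE _ _ F0 (n := `|k - q|)); last by lia.
rewrite big_mkcond /=; apply: eq_bigr => i _; rewrite /mulmono.
case: ifP => [_|/negbT]; first by congr (F _ _ *~ _); ring.
by rewrite -leNgt => le_i; rewrite F0 ?mul0rz //; lia.
Qed.

Lemma eq_series_Res2 N F1 F2 : vanish_below N F1 -> vanish_below N F2 ->
  (forall m q, q < - N ->
     Res2 (mulpow m (mulmono 0 q F1)) = Res2 (mulpow m (mulmono 0 q F2))) ->
  F1 = F2.
Proof.
(* the residue for q = -1 - N - n involves the degrees N .. N + n only, and
   degree N + n with coefficient binz m 0 = 1 *)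
move=> F10 F20 eq_Res.
have Res_diff m (n : nat) :
    \sum_(i < n.+1) (F1 (-1 - m + i%:Z) (N + n%:Z - i%:Z)
                     - F2 (-1 - m + i%:Z) (N + n%:Z - i%:Z)) *~ binz m i = 0.
  have := eq_Res m (-1 - N - n%:Z) ltac:(lia); rewrite /Res2.
  rewrite (mulpowE _ _ (mulmono_vanish 0 F10) (n := n.+1)); last by lia.
  rewrite (mulpowE _ _ (mulmono_vanish 0 F20) (n := n.+1)); last by lia.
  move/eqP; rewrite -subr_eq0 -sumrB => /eqP eq_sums; rewrite -[RHS]eq_sums.
  apply: eq_big => // i _; rewrite /mulmono mulrzBl.
  by congr (F1 _ _ *~ _ - F2 _ _ *~ _); ring.
have eq_from_N n A : F1 A (N + n%:Z) = F2 A (N + n%:Z).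
  elim/ltn_ind: n A => n IH A; apply: subr0_eq.
  have := Res_diff (-1 - A) n; rewrite big_ord_recl big1 ?addr0.
    have -> : -1 - (-1 - A) = A by ring.
    by rewrite binz0 mulr1z; apply.
  move=> i _; rewrite /bump /=.
  have -> : N + n%:Z - (1 + i)%:Z = N + (n - (1 + i))%:Z by have := ltn_ord i; lia.
  by rewrite IH ?subrr ?mul0rz //; have := ltn_ord i; lia.
apply: functional_extensionality => A; apply: functional_extensionality => B.
have [lt_B|le_B] := ltP B N; first by rewrite F10 ?F20.
have -> : B = N + `|B - N|%:Z by lia.
exact: eq_from_N.
Qed.

End Series.

Theorem theorem3p1 (K : fieldType) (hK : [pchar K] =i pred0)
  (V : lmodType K) (Y : V -> V -> int -> V) (vac omega : V) (c : K)
  (hV : is_VOA Y vac omega c)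
  (W : lmodType K) (YW : V -> W -> int -> W) (hW : is_vertex_map YW)
  (u v : V) (w : W) (k l : int)
  (hv : forall n : int, k <= n -> YW v w n = 0)
  (hu : forall n : int, l <= n -> YW u w n = 0)
  (hi : forall p q : int, q < k ->
     Res2 (mulpow p (mulmono 0 q (YW_shift_comp YW u v w)))
     = Res2 (mulP k l p q (mulmono 0 q (mulpow l (YW_iter Y YW u v w)))))
  (hii : forall (p q i : int), k - q <= i ->
     Res2 (mulmono (p - l - i) (q + i) (mulpow l (YW_iter Y YW u v w))) = 0) :
  mulpow l (YW_shift_comp YW u v w) = mulpow l (YW_iter Y YW u v w).
Proof.
have YW_0 x n : YW x 0 n = 0.
  case: hW => _ YW_linear _; have := YW_linear 1 x 0 0 n.
  rewrite !scale1r addr0 => YW_0_double.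
  by apply: (addIr (YW x 0 n)); rewrite add0r -YW_0_double.
set F := YW_shift_comp YW u v w; set G := mulpow l (YW_iter Y YW u v w).
have F0 : vanish_below (- k) F.
  move=> a b lt_b; rewrite /F /YW_shift_comp (fsumE (N := 0)) ?big_ord0 // => j _.
  by rewrite hv ?YW_0 ?mul0rz //; lia.
have G0 : vanish_below (- k) G.
  move=> A B lt_B; have := hii (l - 1 - A) (-1 - B) 0 ltac:(lia).
  rewrite /Res2 /mulmono.
  have -> : -1 - (l - 1 - A - l - 0) = A by ring.
  by have -> : -1 - (-1 - B + 0) = B by ring.
apply: (eq_series_Res2 (mulpow_vanish l F0) G0) => m q lt_q.
rewrite -mulpow_mulmono (mulpowD _ _ (mulmono_vanish 0 F0)) hi; last by lia.
by rewrite /Res2 (mulP_mulpow _ _ _ (mulmono_vanish 0 G0)) ?addrK //; lia.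
Qed.
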